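(* Let $p\in[1,\infty]$. (i) If $\mathcal A\subsetneq\mathcal B$ are $\sigma$-subfields, then $\|\mathbb P_{\mathcal B}-\mathbb P_{\mathcal A}\|_{L^p\to L^p}\ge1$. (ii) If $\mathcal A,\mathcal B$ are $\sigma$-subfields and there is $A\in\mathcal A$ with $\mathbb P(A)\in(0,1)$ that is independent of $\mathcal B$, then $\|\mathbb P_{\mathcal A}-\mathbb P_{\mathcal B}\|_{L^p\to L^p}\ge1$. Consequently, for $\sigma$-subfields $(\mathcal B_n)_{n\in\mathbb N_0}$, $\|\mathbb P_{\mathcal B_n}-\mathbb P_{\mathcal B_0}\|_{L^p\to L^p}\not\to0$ whenever either for infinitely many $n$ one has $\mathcal B_n\subsetneq\mathcal B_0$ or $\mathcal B_0\subsetneq\mathcal B_n$, or for infinitely many $n$ one of $\mathcal B_n,\mathcal B_0$ contains an event of probability in $(0,1)$ independent of the other. In particular, a monotone (increasing or decreasing) sequence of $\sigma$-subfields that is not ultimately constant never converges to its limit $\bigvee_n\mathcal B_n$ (resp. $\bigcap_n\mathcal B_n$) in the $L^p\to L^p$ operator norm.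
   Context: Let $(\Omega,\mathcal F,\mathbb P)$ be a (not necessarily complete) probability space and $\mathcal N:=\{F\in\mathcal F:\mathbb P(F)=0\}$. A $\sigma$-subfield is a sub-$\sigma$-field $\mathcal A\subset\mathcal F$ with $\mathcal A=\sigma(\mathcal A\cup\mathcal N)$. For a $\sigma$-subfield $\mathcal A$, $\mathbb P_{\mathcal A}f:=\mathbb E^{\mathbb P}[f\mid\mathcal A]$, viewed as a bounded linear operator on the real normed space $L^p(\mathbb P)$; $\|\cdot\|_{L^p\to L^p}$ is the operator norm. *)

From HB Require Import structures.
From mathcomp Require Import all_boot all_order all_algebra.
From mathcomp Require Import all_classical all_reals all_analysis.
Set Implicit Arguments. Unset Strict Implicit. Unset Printing Implicit Defensive.
Import Order.TTheory GRing.Theory Num.Theory.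
Local Open Scope classical_set_scope.
Local Open Scope ring_scope.

Definition null_sets d (T : measurableType d) (R : realType)
  (P : probability T R) : set (set T) :=
  [set N | measurable N /\ P N = 0%E].

Definition sigma_subfield d (T : measurableType d) (R : realType)
  (P : probability T R) (A : set (set T)) : Prop :=
  A `<=` measurable /\ A = <<s A `|` null_sets P >>.

Definition sf_measurable d (T : measurableType d) (R : realType)
  (A : set (set T)) (g : T -> R) : Prop :=
  forall B : set R, measurable B -> A (g @^-1` B).

Definition is_cond_exp d (T : measurableType d) (R : realType)
  (P : probability T R) (A : set (set T)) (f g : T -> R) : Prop :=
  [/\ sf_measurable A g, P.-integrable setT (EFin \o g) &
      forall G, A G -> (\int[P]_(x in G) (g x)%:E = \int[P]_(x in G) (f x)%:E)%E].

(* P_A f : a (chosen) version of the conditional expectation (0 if none). *)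
Definition cond_exp d (T : measurableType d) (R : realType)
  (P : probability T R) (A : set (set T)) (f : T -> R) : T -> R :=
  xget (fun _ => 0) [set g | is_cond_exp P A f g].

Definition Lp_fun d (T : measurableType d) (R : realType)
  (P : probability T R) (p : \bar R) (f : T -> R) : Prop :=
  measurable_fun setT f /\ (Lnorm P p (EFin \o f) < +oo)%E.

Definition opnorm d (T : measurableType d) (R : realType)
  (P : probability T R) (p : \bar R) (Op : (T -> R) -> (T -> R)) : \bar R :=
  ereal_sup [set Lnorm P p (EFin \o Op f) |
               f in [set f | Lp_fun P p f /\ (Lnorm P p (EFin \o f) <= 1)%E]].

Definition indep_event d (T : measurableType d) (R : realType)
  (P : probability T R) (E : set T) (B : set (set T)) : Prop :=
  forall G, B G -> P (E `&` G) = (P E * P G)%E.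

Definition has_indep_event d (T : measurableType d) (R : realType)
  (P : probability T R) (A B : set (set T)) : Prop :=
  exists E, [/\ A E, (0 < P E)%E, (P E < 1)%E & indep_event P E B].

From HB Require Import structures.
From mathcomp Require Import all_boot all_order all_algebra.
From mathcomp Require Import all_classical all_reals all_analysis.
From mathcomp Require Import measurable_realfun ess_sup_inf.
Import Order.TTheory GRing.Theory Num.Theory.
Local Open Scope classical_set_scope.
Local Open Scope ring_scope.
Set Implicit Arguments. Unset Strict Implicit. Unset Printing Implicit Defensive.

(* If P_B - P_A fixes every multiple of some nonzero f in L^p, then f / ||f||_p
   is a unit vector fixed by P_B - P_A, so the operator norm is at least 1.
   (i) For A strictly inside B, pick E in B but not in A and a [0,1]-valued
   version g of E[1_E | A].  Then f = 1_E - g is B-measurable, so P_B f = f,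
   while P_A f = 0; and f is not a.e. zero, for otherwise E would agree a.e.
   with the A-set {g = 1} and, A containing the null sets, would lie in A.
   (ii) If E in A has 0 < P E < 1 and is independent of B, then f = 1_E - P E
   is A-measurable, never vanishes, and P_B f = 0.
   For sequences, the norms are >= 1 along infinitely many indices; a monotone
   sequence that is not ultimately constant is at every index a proper
   sub-(super-)field of its supremum (infimum). *)

Section sigma_subfield.
Context d (T : measurableType d) (R : realType) (P : probability T R).
Implicit Types (A B : set (set T)) (g : T -> R).

Lemma sigma_subfield_sigma_algebra A : sigma_subfield P A -> sigma_algebra setT A.
Proof. by case=> _ ->; exact: smallest_sigma_algebra. Qed.

Lemma sigma_subfield_null A N : sigma_subfield P A -> measurable N -> P N = 0%E -> A N.
Proof. by case=> _ -> mN PN0; apply: sub_gen_smallest; right. Qed.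

Lemma sigma_subfield_measurableE A : sigma_subfield P A ->
  @measurable _ (g_sigma_algebraType A) = A.
Proof. by move/sigma_subfield_sigma_algebra; exact: sigma_algebra_id. Qed.

Lemma sf_measurableP A g : sigma_subfield P A ->
  sf_measurable A g <-> measurable_fun [set: g_sigma_algebraType A] g.
Proof.
move=> sA; split=> mg.
  by move=> _ B mB; rewrite setTI (sigma_subfield_measurableE sA); exact: mg.
by move=> B mB; move: (mg measurableT B mB); rewrite setTI (sigma_subfield_measurableE sA).
Qed.

Lemma sf_measurableS A B g : A `<=` B -> sf_measurable A g -> sf_measurable B g.
Proof. by move=> AB mg Y mY; apply/AB/mg. Qed.

Lemma sf_measurable_fun A g : A `<=` measurable -> sf_measurable A g ->
  measurable_fun setT g.
Proof. by move=> Am mg _ B mB; rewrite setTI; apply/Am/mg. Qed.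

Lemma sf_measurable_cst A (c : R) : sigma_subfield P A -> sf_measurable A (cst c).
Proof. by move=> sA; apply/(sf_measurableP _ sA); exact: measurable_cst. Qed.

Lemma sigma_subfield_ae_mem A E F : sigma_subfield P A -> measurable E -> A F ->
  (\forall x \ae P, E x <-> F x) -> A E.
Proof.
move=> sA mE AF [N [mN PN0 EFN]].
have AN : A N := sigma_subfield_null sA mN PN0.
have AEN : A (E `&` N).
  apply: (sigma_subfield_null sA); first exact: measurableI.
  exact: (subset_measure0 (measurableI _ _ mE mN) mN (@subIsetr _ _ _) PN0).
have -> : E = (E `&` N) `|` (F `&` ~` N).
  have EF x : ~ N x -> E x <-> F x by move=> nNx; apply: contrapT => /EFN.
  apply/seteqP; split=> x.
    by move=> Ex; have [Nx|nNx] := pselect (N x); [left|right; split=> //; exact/EF].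
  by case=> [[]//|[Fx nNx]]; exact/EF.
rewrite -(sigma_subfield_measurableE sA) in AN AEN AF *.
by apply: measurableU => //; apply: measurableI => //; exact: measurableC.
Qed.

End sigma_subfield.

Section integral.
Context d (T : measurableType d) (R : realType).
Local Open Scope ereal_scope.

Lemma measure0_gt0_integral_le0 (mu : {measure set T -> \bar R}) D (u : T -> R) :
  measurable D -> mu.-integrable D (EFin \o u) -> (forall x, D x -> (0 < u x)%R) ->
  \int[mu]_(x in D) (u x)%:E <= 0 -> mu D = 0.
Proof.
move=> mD iu u0 ile; have mu_ := measurable_int mu iu.
have : \int[mu]_(x in D) `|(EFin \o u) x| = 0.
  apply/eqP; rewrite eq_le integral_ge0 ?andbT //.
  rewrite (eq_integral (fun x => (u x)%:E)) // => x /set_mem Dx.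
  by rewrite /= ger0_norm // ltW // u0.
case/(ae_eq_integral_abs mu mD mu_) => N [mN N0 sN].
apply: (subset_measure0 mD mN _ N0) => x Dx; apply: sN => /= /(_ Dx) /eqP.
by rewrite eqe gt_eqF // u0.
Qed.

Lemma integrable_bounded (mu : {finite_measure set T -> \bar R}) (g : T -> R) M :
  (forall x, `|g x| <= M)%R -> measurable_fun setT g ->
  mu.-integrable setT (EFin \o g).
Proof.
move=> gM mg; apply: measurable_bounded_integrable => //; first exact: fin_num_fun_lty.
exists M; split; first exact: num_real.
by move=> K MK x _; apply: le_trans (gM x) (ltW MK).
Qed.

End integral.

Section sf_integral.
Context d (T : measurableType d) (R : realType) (P : probability T R).
Local Open Scope ereal_scope.

Lemma sf_integral_le_ae_le A (g h : T -> R) : sigma_subfield P A ->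
  sf_measurable A g -> sf_measurable A h ->
  P.-integrable setT (EFin \o g) -> P.-integrable setT (EFin \o h) ->
  (forall G, A G -> \int[P]_(x in G) (g x)%:E <= \int[P]_(x in G) (h x)%:E) ->
  \forall x \ae P, (g x <= h x)%R.
Proof.
move=> sA mg mh ig ih gh; set D := [set x | (h x < g x)%R].
have AD : A D.
  have /(_ measurableT _ (measurable_itv `]0%R, +oo[)) :=
    measurable_funB (proj1 (sf_measurableP _ sA) mg) (proj1 (sf_measurableP _ sA) mh).
  rewrite setTI (sigma_subfield_measurableE sA).
  suff -> : D = (g \- h)%R @^-1` `]0%R, +oo[ by [].
  by apply/seteqP; split => x /=; rewrite in_itv /= andbT subr_gt0.
have mD : measurable D := sA.1 _ AD.
have igD := integrableS measurableT mD (@subsetT _ _) ig.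
have ihD := integrableS measurableT mD (@subsetT _ _) ih.
exists D; split => //; last by move=> x /= /negP; rewrite -ltNge.
apply: (measure0_gt0_integral_le0 (u := (g \- h)%R) mD).
- rewrite (_ : EFin \o _ = (EFin \o g) \- (EFin \o h)); first exact: integrableB.
  by apply/funext => x /=; rewrite EFinB.
- by move=> x; rewrite /D /= subr_gt0.
under eq_integral do rewrite EFinB.
by rewrite integralB_EFin // sube_le0 ?gh //; exact: integrable_fin_num.
Qed.

End sf_integral.

Section cond_exp.
Context d (T : measurableType d) (R : realType) (P : probability T R).
Implicit Types (A : set (set T)) (f g h : T -> R).
Local Open Scope ereal_scope.

Lemma is_cond_exp_uniq A f g h : sigma_subfield P A ->
  is_cond_exp P A f g -> is_cond_exp P A f h -> g = h %[ae P].
Proof.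
move=> sA [mg ig eg] [mh ih eh].
have gh G : A G -> \int[P]_(x in G) (g x)%:E = \int[P]_(x in G) (h x)%:E.
  by move=> AG; rewrite eg // eh.
have le_gh : \forall x \ae P, (g x <= h x)%R.
  by apply: (sf_integral_le_ae_le sA) => // G AG; rewrite gh.
have le_hg : \forall x \ae P, (h x <= g x)%R.
  by apply: (sf_integral_le_ae_le sA) => // G AG; rewrite gh.
by apply: filterS2 le_gh le_hg => x gh1 hg1 _; apply/le_anti/andP.
Qed.

Lemma cond_expP A f : (exists g, is_cond_exp P A f g) ->
  is_cond_exp P A f (cond_exp P A f).
Proof. exact: xgetPex. Qed.

Lemma cond_exp_none A f : ~ (exists g, is_cond_exp P A f g) -> cond_exp P A f = cst 0%R.
Proof. by move=> nex; rewrite /cond_exp; apply: xgetPN => g fg; apply: nex; exists g. Qed.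

Lemma measurable_cond_exp A f : sigma_subfield P A -> measurable_fun setT (cond_exp P A f).
Proof.
move=> sA; apply: (sf_measurable_fun sA.1).
case: (pselect (exists g, is_cond_exp P A f g)) => [/cond_expP[]//|nex].
by rewrite cond_exp_none //; exact: sf_measurable_cst sA.
Qed.

Lemma cond_exp_ae A f g : sigma_subfield P A -> is_cond_exp P A f g ->
  cond_exp P A f = g %[ae P].
Proof. by move=> sA fg; apply: (is_cond_exp_uniq sA _ fg); apply: cond_expP; exists g. Qed.

Lemma is_cond_exp_ae_eq A f g h : sigma_subfield P A ->
  is_cond_exp P A f g -> sf_measurable A h -> g = h %[ae P] -> is_cond_exp P A f h.
Proof.
move=> sA [mg ig eg] mh gh.
have mg' := sf_measurable_fun sA.1 mg; have mh' := sf_measurable_fun sA.1 mh.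
have int_gh G : measurable G ->
    \int[P]_(x in G) (g x)%:E = \int[P]_(x in G) (h x)%:E.
  move=> mG; apply: ae_eq_integral => //; try exact/measurable_EFinP/measurable_funTS.
  by apply: filterS gh => x + Gx; move/(_ I) => ->.
split => // [|G AG]; last by rewrite -int_gh ?eg //; exact: sA.1.
apply/integrableP; split; first exact/measurable_EFinP.
case/integrableP: ig => _; rewrite (ae_eq_integral (fun x => `|(h x)%:E|)) //.
- by apply/measurableT_comp => //; exact/measurable_EFinP.
- by apply/measurableT_comp => //; exact/measurable_EFinP.
- by apply: filterS gh => x /(_ I) /= ->.
Qed.

Lemma is_cond_expZ A f g (k : R) : sigma_subfield P A ->
  P.-integrable setT (EFin \o f) -> is_cond_exp P A f g ->
  is_cond_exp P A (fun x => k * f x)%R (fun x => k * g x)%R.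
Proof.
move=> sA if_ [mg ig eg]; split.
- by apply/(sf_measurableP _ sA)/measurable_funM => //; exact/(sf_measurableP _ sA).
- rewrite (_ : EFin \o _ = fun x => k%:E * (g x)%:E); first exact: integrableZl.
  by apply/funext => x /=; rewrite EFinM.
move=> G AG; have mG := sA.1 _ AG.
under eq_integral do rewrite EFinM; under [RHS]eq_integral do rewrite EFinM.
rewrite integralZl ?integralZl ?eg //.
  exact: integrableS measurableT mG (@subsetT _ _) if_.
exact: integrableS measurableT mG (@subsetT _ _) ig.
Qed.

Lemma is_cond_expB A f1 f2 g1 g2 : sigma_subfield P A ->
  P.-integrable setT (EFin \o f1) -> P.-integrable setT (EFin \o f2) ->
  is_cond_exp P A f1 g1 -> is_cond_exp P A f2 g2 ->
  is_cond_exp P A (f1 \- f2)%R (g1 \- g2)%R.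
Proof.
move=> sA if1 if2 [mg1 ig1 eg1] [mg2 ig2 eg2]; split.
- apply/(sf_measurableP _ sA)/measurable_funB; exact/(sf_measurableP _ sA).
- rewrite (_ : EFin \o _ = (EFin \o g1) \- (EFin \o g2)); first exact: integrableB.
  by apply/funext => x /=; rewrite EFinB.
move=> G AG; have mG := sA.1 _ AG.
have iS F : P.-integrable setT F -> P.-integrable G F.
  exact: integrableS measurableT mG (@subsetT _ _).
under eq_integral do rewrite /= EFinB; under [RHS]eq_integral do rewrite /= EFinB.
by rewrite !integralB_EFin ?eg1 ?eg2 //; apply: iS.
Qed.

Lemma is_cond_exp_centered A f g (c : R) : sigma_subfield P A ->
  P.-integrable setT (EFin \o f) -> is_cond_exp P A f g ->
  is_cond_exp P A (fun x => c * (f x - g x))%R (cst 0%R).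
Proof.
move=> sA if_ fg; have [mg ig _] := fg.
rewrite (_ : cst 0%R = fun x => c * (g \- g) x)%R; last first.
  by apply/funext => x; rewrite /= subrr mulr0.
have gg : is_cond_exp P A g g by split.
exact: (is_cond_expZ c sA (integrableB _ if_ ig) (is_cond_expB sA if_ ig fg gg)).
Qed.

Lemma is_cond_exp_indep_indic B E : sigma_subfield P B -> measurable E ->
  indep_event P E B -> is_cond_exp P B \1_E (cst (fine (P E))).
Proof.
move=> sB mE ind; split; first exact: sf_measurable_cst sB.
  by apply: (integrable_bounded _ (M := `|fine (P E)|%R)) => //; exact: measurable_cst.
move=> G BG; have mG := sB.1 _ BG.
rewrite (integral_cst P mG (fine (P E))%:E) integral_indic // fineK ?fin_num_measure //.
exact/esym/ind.
Qed.

Lemma cond_expZ_none A f (k : R) : sigma_subfield P A ->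
  P.-integrable setT (EFin \o f) -> k != 0%R -> ~ (exists g, is_cond_exp P A f g) ->
  cond_exp P A (fun x => k * f x)%R = cst 0%R.
Proof.
move=> sA if_ k0 nex; apply: cond_exp_none => -[h kfh]; apply: nex.
exists (fun x => k^-1 * h x)%R.
have ikf : P.-integrable setT (EFin \o (fun x => k * f x)%R).
  rewrite (_ : EFin \o _ = fun x => k%:E * (f x)%:E); first exact: integrableZl.
  by apply/funext => x /=; rewrite EFinM.
have := is_cond_expZ k^-1 sA ikf kfh.
by under eq_fun do rewrite mulrA mulVf // mul1r.
Qed.

Lemma is_cond_exp_indic_ge0_le1 A E g : sigma_subfield P A -> measurable E ->
  is_cond_exp P A \1_E g -> \forall x \ae P, (0 <= g x <= 1)%R.
Proof.
move=> sA mE [mg ig eg].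
have icst (c : R) : P.-integrable setT (EFin \o cst c).
  by apply: (integrable_bounded _ (M := `|c|%R)) => //; exact: measurable_cst.
have ge0 : \forall x \ae P, (cst 0 x <= g x)%R.
  apply: (sf_integral_le_ae_le sA) => //; first exact: sf_measurable_cst sA.
  move=> G AG; rewrite eg // integral_indic //; last exact: sA.1 _ AG.
  by rewrite (integral_cst P (sA.1 _ AG) 0%E) mul0e measure_ge0.
have le1 : \forall x \ae P, (g x <= cst 1 x)%R.
  apply: (sf_integral_le_ae_le sA) => //; first exact: sf_measurable_cst sA.
  move=> G AG; have mG := sA.1 _ AG.
  rewrite eg // integral_indic // (integral_cst P mG 1%E) mul1e.
  by apply: le_measure; rewrite ?inE //; exact: measurableI.
by apply: filterS2 ge0 le1 => x /= -> ->.
Qed.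

Lemma exists_cond_exp_indic_centered A E : sigma_subfield P A -> measurable E ->
  exists g, [/\ sf_measurable A g, (forall x, 0 <= g x <= 1)%R &
    forall c : R, (0 < c)%R ->
      cond_exp P A (fun x => c * (\1_E x - g x))%R = cst 0%R %[ae P]].
Proof.
move=> sA mE.
have iE := integrable_indic P mE.
(* Without a version of E[1_E | A] there is none of E[c 1_E | A] either, so
   [cond_exp] returns its default 0 and g = 0 works. *)
case: (pselect (exists g, is_cond_exp P A \1_E g)) => [[g0 Eg0]|nex]; last first.
  exists (cst 0%R); split => [||c c0]; first exact: sf_measurable_cst sA.
    by move=> x; rewrite lexx ler01.
  have -> : (fun x => c * (\1_E x - cst 0 x))%R = (fun x => c * \1_E x)%R.
    by apply/funext => x; rewrite subr0.
  by rewrite cond_expZ_none ?gt_eqF //; exact: ae_eq_refl.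
(* Clipping changes g0 only on a null set but makes 1_E - g bounded. *)
set g := fun x => Num.min (Num.max (g0 x) 0%R) 1%R.
have mg : sf_measurable A g.
  apply/(sf_measurableP _ sA)/measurable_minr => //.
  by apply: measurable_maxr => //; apply/(sf_measurableP _ sA); case: Eg0.
have g01 x : (0 <= g x <= 1)%R.
  by rewrite /g le_min ler01 le_max lexx orbT ge_min lexx orbT.
have ig : P.-integrable setT (EFin \o g).
  apply: (integrable_bounded _ (M := 1%R)) => [x|]; last exact: sf_measurable_fun sA.1 mg.
  by have /andP[g0x g1x] := g01 x; rewrite ger0_norm.
have Eg : is_cond_exp P A \1_E g.
  apply: (is_cond_exp_ae_eq sA Eg0 mg).
  apply: filterS (is_cond_exp_indic_ge0_le1 sA mE Eg0) => x /andP[g0x g1x] _.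
  by rewrite /g max_l // min_l.
by exists g; split => // c c0; apply/(cond_exp_ae sA)/is_cond_exp_centered.
Qed.

End cond_exp.

Section Lnorm.
Context d (T : measurableType d) (R : realType).
Local Open Scope ereal_scope.

Lemma Lnorm_ae_eq (mu : {measure set T -> \bar R}) p (f g : T -> R) :
  measurable_fun setT f -> measurable_fun setT g -> f = g %[ae mu] ->
  'N[mu]_p[EFin \o f] = 'N[mu]_p[EFin \o g].
Proof.
move=> mf mg fg.
have absfg : (fun x => `|(f x)%:E|) = (fun x => `|(g x)%:E|) %[ae mu].
  by apply: filterS fg => x /= /(_ I) ->.
rewrite unlock; case: p => [r| |] /=.
- congr (_ `^ _); apply: ae_eq_integral => //.
  + apply/measurable_EFinP/(measurableT_comp (measurable_powR r)).
    exact: measurableT_comp.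
  + apply/measurable_EFinP/(measurableT_comp (measurable_powR r)).
    exact: measurableT_comp.
  + by apply: filterS fg => x /= /[apply] ->.
- by case: ifPn => // _; apply: eq_ess_sup; apply: filterS absfg => x /(_ I).
- by case: ifPn => // _; apply: eq_ess_inf; apply: filterS absfg => x /(_ I).
Qed.

Lemma LnormZ_fun (mu : {measure set T -> \bar R}) p (p1 : 1 <= p) (f : T -> R) (c : R) :
  measurable_fun setT f -> 'N[mu]_p[EFin \o f] < +oo ->
  'N[mu]_p[EFin \o (fun x => c * f x)%R] = `|c|%:E * 'N[mu]_p[EFin \o f].
Proof.
move=> mf ff; have fL : f \in Lfun mu p by rewrite inE; apply/andP; split; rewrite inE.
by rewrite -(LnormZ (Lfun_Sub p1 fL) c).
Qed.

Lemma Lnorm_bounded_lty (mu : {finite_measure set T -> \bar R}) p (p1 : 1 <= p)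
    (g : T -> R) M :
  (forall x, `|g x| <= M)%R -> measurable_fun setT g -> 'N[mu]_p[EFin \o g] < +oo.
Proof.
move=> gM mg; have M0 : (0 <= M)%R := le_trans (normr_ge0 (g point)) (gM point).
rewrite unlock; case: p p1 => [r| |] //= r1.
- have r0 : (0 <= r)%R by move: r1; rewrite lee_fin => /(le_trans ler01).
  apply/poweR_lty/(integrable_lty measurableT).
  apply: (integrable_bounded _ (M := (M `^ r)%R)) => [x|].
    by rewrite ger0_norm ?powR_ge0 // ge0_ler_powR.
  by apply/(measurableT_comp (measurable_powR r)); exact: measurableT_comp.
- case: ifPn => // _; apply: le_lt_trans (ltry M); apply/ess_supP.
  by apply: nearW => x /=; rewrite lee_fin.
Qed.

Lemma Lnorm_gt0 (mu : {measure set T -> \bar R}) p (g : T -> R) : 0 < p ->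
  measurable_fun setT g -> ~ g = cst 0%R %[ae mu] -> 0 < 'N[mu]_p[EFin \o g].
Proof.
move=> p0 mg g0; rewrite lt0e Lnorm_ge0 andbT; apply/eqP => /Lnorm_eq0_eq0.
move=> /(_ ((measurable_EFinP _ _).2 mg) p0) g0'; apply: g0.
by apply: filterS g0' => x /[apply] -[].
Qed.

End Lnorm.

Section opnorm.
Context d (T : measurableType d) (R : realType) (P : probability T R).
Local Open Scope ereal_scope.

(* [cond_exp] picks an arbitrary version, so nothing makes it linear: the
   hypothesis has to cover every positive multiple of f, in particular
   f / ||f||_p. *)
Lemma opnorm_ge1 p (p1 : 1 <= p) (Op : (T -> R) -> T -> R) (f : T -> R) :
  Lp_fun P p f -> ~ f = cst 0%R %[ae P] ->
  (forall c : R, (0 < c)%R -> measurable_fun setT (Op (fun x => c * f x)%R) /\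
     Op (fun x => c * f x)%R = (fun x => c * f x)%R %[ae P]) ->
  1 <= opnorm P p Op.
Proof.
move=> [mf ff] f0 Opf.
have := Lnorm_gt0 (lt_le_trans lte01 p1) mf f0.
set L := 'N[P]_p[EFin \o f] in ff * => L0.
have Lfin : L \is a fin_num by rewrite ge0_fin_numE // ltW.
have fL0 : (0 < fine L)%R by rewrite fine_gt0 // L0 ff.
set c := (fine L)^-1%R; have c0 : (0 < c)%R by rewrite invr_gt0.
set g := (fun x => c * f x)%R.
have mg : measurable_fun setT g by exact: measurable_funM.
have Lg : 'N[P]_p[EFin \o g] = 1.
  by rewrite LnormZ_fun // -/L -(fineK Lfin) -EFinM gtr0_norm // mulVf // gt_eqF.
have [mOg Ogg] := Opf c c0.
rewrite -Lg -(Lnorm_ae_eq _ mOg mg Ogg); apply: ereal_sup_ubound.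
by exists g => //; split; [split => //; rewrite Lg ltry|rewrite Lg].
Qed.

Lemma opnorm_sub_cond_exp_ge1 p (p1 : 1 <= p) A B (f : T -> R) :
  sigma_subfield P A -> sigma_subfield P B -> Lp_fun P p f -> ~ f = cst 0%R %[ae P] ->
  (forall c : R, (0 < c)%R ->
    cond_exp P A (fun x => c * f x)%R = (fun x => c * f x)%R %[ae P] /\
    cond_exp P B (fun x => c * f x)%R = cst 0%R %[ae P]) ->
  1 <= opnorm P p (fun f x => cond_exp P A f x - cond_exp P B f x)%R.
Proof.
move=> sA sB fLp f0 hAB; apply: (opnorm_ge1 p1 fLp f0) => c c0.
have [eA eB] := hAB c c0; split.
  by apply: measurable_funB; [exact: measurable_cond_exp sA|exact: measurable_cond_exp sB].
by apply: filterS2 eA eB => x hA hB _; rewrite hA // hB // subr0.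
Qed.

Lemma opnorm_sub_cond_expC p A B :
  opnorm P p (fun f x => cond_exp P A f x - cond_exp P B f x)%R =
  opnorm P p (fun f x => cond_exp P B f x - cond_exp P A f x)%R.
Proof.
rewrite /opnorm; congr ereal_sup; apply/seteqP; split => _ [f Sf <-];
  by exists f => //; rewrite -oppe_Lnorm; apply: eq_Lnorm => x /=; rewrite opprB.
Qed.

End opnorm.

Section lower_bounds.
Context d (T : measurableType d) (R : realType) (P : probability T R).
Local Open Scope ereal_scope.

Lemma probability_ae_ex (Q : T -> Prop) : (\forall x \ae P, Q x) -> exists x, Q x.
Proof.
have : ProperFilter (almost_everywhere P).
  apply: ae_properfilter_algebraOfSetsType.
  by change (0 < P [set: T]); rewrite probability_setT lte01.
by move=> ? /filter_ex.
Qed.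

Lemma norm_indic_sub_le1 (E : set T) (a : R) x : (0 <= a <= 1)%R ->
  (`|\1_E x - a| <= 1)%R.
Proof.
case/andP => a0 a1; rewrite indicE; case: (x \in E) => /=.
  by rewrite ger0_norm ?subr_ge0 // gerBl.
by rewrite sub0r normrN ger0_norm.
Qed.

Lemma Lp_fun_bounded p (p1 : 1 <= p) (f : T -> R) M :
  (forall x, `|f x| <= M)%R -> measurable_fun setT f -> Lp_fun P p f.
Proof. by move=> fM mf; split => //; exact: Lnorm_bounded_lty fM mf. Qed.

Lemma cond_exp_scale_ae_id A (f : T -> R) M : sigma_subfield P A ->
  (forall x, `|f x| <= M)%R -> sf_measurable A f ->
  forall c : R, cond_exp P A (fun x => c * f x)%R = (fun x => c * f x)%R %[ae P].
Proof.
move=> sA fM mf c; have mcf : sf_measurable A (fun x => c * f x)%R.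
  by apply/(sf_measurableP _ sA)/measurable_funM => //; exact/(sf_measurableP _ sA).
apply: (cond_exp_ae sA); split => //.
apply: (integrable_bounded _ (M := (`|c| * M)%R)) => [x|].
  by rewrite normrM ler_wpM2l.
exact: sf_measurable_fun sA.1 mcf.
Qed.

Lemma opnorm_sub_cond_exp_ge1_proper p (p1 : 1 <= p) A B :
  sigma_subfield P A -> sigma_subfield P B -> A `<` B ->
  1 <= opnorm P p (fun f x => cond_exp P B f x - cond_exp P A f x)%R.
Proof.
move=> sA sB [AB nBA].
have [E BE nAE] : exists2 E, B E & ~ A E.
  apply: contrapT => nE; apply: nBA => E BE; apply: contrapT => nAE.
  by apply: nE; exists E.
have mE := sB.1 _ BE.
have [g [mg g01 Ag0]] := exists_cond_exp_indic_centered sA mE.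
set f := (fun x => \1_E x - g x)%R.
have fb x : (`|f x| <= 1)%R := norm_indic_sub_le1 E x (g01 x).
have mfB : sf_measurable B f.
  apply/(sf_measurableP _ sB)/measurable_funB; last first.
    exact/(sf_measurableP _ sB)/(sf_measurableS AB).
  by apply: measurable_indic; rewrite (sigma_subfield_measurableE sB).
have mf := sf_measurable_fun sB.1 mfB.
apply: (opnorm_sub_cond_exp_ge1 p1 sB sA (Lp_fun_bounded p1 fb mf)).
  move=> f0; apply/nAE/(sigma_subfield_ae_mem sA mE (mg _ (measurable_set1 1%R))).
  apply: filterS f0 => x /(_ I); rewrite /f /preimage /= indicE => /eqP.
  rewrite subr_eq0 => /eqP <-; case: (boolP (x \in E)) => [/set_mem Ex|/negP nEx].
    by split.
  by split => [/mem_set/nEx|/eqP] //=; rewrite eq_sym oner_eq0.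
by move=> c c0; split; [exact: (cond_exp_scale_ae_id sB fb mfB)|exact: Ag0].
Qed.

Lemma opnorm_sub_cond_exp_ge1_indep p (p1 : 1 <= p) A B :
  sigma_subfield P A -> sigma_subfield P B -> has_indep_event P A B ->
  1 <= opnorm P p (fun f x => cond_exp P A f x - cond_exp P B f x)%R.
Proof.
move=> sA sB [E [AE PE0 PE1 ind]].
have mE := sA.1 _ AE.
set a := fine (P E).
have aE : a%:E = P E by rewrite fineK // fin_num_measure.
have a0 : (0 < a)%R by rewrite -lte_fin aE.
have a1 : (a < 1)%R by rewrite -lte_fin aE.
set f := (fun x => \1_E x - cst a x)%R.
have fb x : (`|f x| <= 1)%R by apply: norm_indic_sub_le1; rewrite !ltW.
have mfA : sf_measurable A f.
  apply/(sf_measurableP _ sA)/measurable_funB => //.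
  by apply: measurable_indic; rewrite (sigma_subfield_measurableE sA).
have mf := sf_measurable_fun sA.1 mfA.
have iE := integrable_indic P mE.
apply: (opnorm_sub_cond_exp_ge1 p1 sA sB (Lp_fun_bounded p1 fb mf)).
  case/probability_ae_ex => x /(_ I) /eqP; rewrite /f indicE.
  by case: (x \in E); rewrite /= ?subr_eq0 ?sub0r ?oppr_eq0 => /eqP ax;
    [move: a1|move: a0]; rewrite -ax ltxx.
move=> c c0; split; first exact: (cond_exp_scale_ae_id sA fb mfA).
apply: (cond_exp_ae sB).
exact: (is_cond_exp_centered c sB iE (is_cond_exp_indep_indic sB mE ind)).
Qed.

End lower_bounds.

Lemma not_cvg0_infinite_ge1 (R : realType) (u : nat -> \bar R) (S : set nat) :
  infinite_set S -> (forall n, S n -> 1 <= u n)%E -> ~ (u n @[n --> \oo] --> 0%E).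
Proof.
move=> iS uS /fine_cvgP [ufin ucvg].
have [N _ ult1] : \forall n \near \oo, (u n < 1)%E.
  apply: filterS2 ufin (cvgr_lt 0%R ucvg 1%R ltr01) => n fn ln.
  by rewrite -(fineK fn) lte_fin.
apply/iS/(sub_finite_set _ (finite_II N)) => n Sn /=; rewrite ltnNge.
by apply/negP => /ult1; rewrite ltNge uS.
Qed.

Section sequences.
Context d (T : measurableType d) (R : realType) (P : probability T R).
Implicit Types (B : set (set T)) (Bs : nat -> set (set T)).

Lemma sigma_subfield_gen_bigcup Bs : (forall n, sigma_subfield P (Bs n)) ->
  sigma_subfield P (<<s \bigcup_k Bs k >>).
Proof.
move=> sBs; split.
  apply: smallest_sub; first exact: sigma_algebra_measurable.
  by move=> X [k _ BkX]; exact: (sBs k).1.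
apply/seteqP; split; first by move=> X LX; apply: sub_gen_smallest; left.
apply: smallest_sub; first exact: smallest_sigma_algebra.
move=> X [//|[mX X0]]; apply: sub_gen_smallest; exists 0%N => //.
exact: (sigma_subfield_null (sBs 0%N)).
Qed.

Lemma sigma_subfield_bigcap Bs : (forall n, sigma_subfield P (Bs n)) ->
  sigma_subfield P (\bigcap_k Bs k).
Proof.
move=> sBs; split; first by move=> X BX; exact: (sBs 0%N).1 _ (BX 0%N I).
apply/seteqP; split; first by move=> X LX; apply: sub_gen_smallest; left.
move=> X gX k _; apply: (smallest_sub (sigma_subfield_sigma_algebra (sBs k))) gX.
by move=> Y [BY|[mY Y0]]; [exact: BY|exact: (sigma_subfield_null (sBs k))].
Qed.

Lemma opnorm_sub_cond_exp_not_cvg0 p (p1 : (1 <= p)%E) Bs B :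
  (forall n, sigma_subfield P (Bs n)) -> sigma_subfield P B ->
  infinite_set [set n | Bs n `<` B \/ B `<` Bs n] \/
  infinite_set [set n | has_indep_event P (Bs n) B \/ has_indep_event P B (Bs n)] ->
  ~ (opnorm P p (fun f x => cond_exp P (Bs n) f x - cond_exp P B f x)
       @[n --> \oo] --> 0%E).
Proof.
move=> sBs sB [] /not_cvg0_infinite_ge1; apply => n [] h.
- by rewrite opnorm_sub_cond_expC; exact: opnorm_sub_cond_exp_ge1_proper.
- exact: opnorm_sub_cond_exp_ge1_proper.
- exact: opnorm_sub_cond_exp_ge1_indep.
- by rewrite opnorm_sub_cond_expC; exact: opnorm_sub_cond_exp_ge1_indep.
Qed.

Lemma opnorm_sub_cond_exp_not_cvg0_incr p (p1 : (1 <= p)%E) Bs :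
  (forall n, sigma_subfield P (Bs n)) -> (forall n m, (n <= m)%N -> Bs n `<=` Bs m) ->
  ~ (exists N, forall n, (N <= n)%N -> Bs n = Bs N) ->
  ~ (opnorm P p (fun f x => cond_exp P (Bs n) f x - cond_exp P (<<s \bigcup_k Bs k >>) f x)
       @[n --> \oo] --> 0%E).
Proof.
move=> sBs mono nconst.
apply: (opnorm_sub_cond_exp_not_cvg0 p1 sBs (sigma_subfield_gen_bigcup sBs)).
left=> finS; apply/infinite_nat/(sub_finite_set _ finS) => N _; left; split.
  by move=> X BNX; apply: sub_gen_smallest; exists N.
move=> BNmax; apply: nconst; exists N => n Nn; apply/seteqP; split; last exact: mono.
by move=> X BnX; apply: BNmax; apply: sub_gen_smallest; exists n.
Qed.

Lemma opnorm_sub_cond_exp_not_cvg0_decr p (p1 : (1 <= p)%E) Bs :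
  (forall n, sigma_subfield P (Bs n)) -> (forall n m, (n <= m)%N -> Bs m `<=` Bs n) ->
  ~ (exists N, forall n, (N <= n)%N -> Bs n = Bs N) ->
  ~ (opnorm P p (fun f x => cond_exp P (Bs n) f x - cond_exp P (\bigcap_k Bs k) f x)
       @[n --> \oo] --> 0%E).
Proof.
move=> sBs mono nconst.
apply: (opnorm_sub_cond_exp_not_cvg0 p1 sBs (sigma_subfield_bigcap sBs)).
left=> finS; apply/infinite_nat/(sub_finite_set _ finS) => N _; right; split.
  by move=> X BX; exact: BX N I.
move=> BNmin; apply: nconst; exists N => n Nn; apply/seteqP; split; first exact: mono.
by move=> X BNX; exact: BNmin _ BNX n I.
Qed.

End sequences.

Theorem mainTheorem13 (d : measure_display) (T : measurableType d)
  (R : realType) (P : probability T R) (p : \bar R) (hp : (1 <= p)%E) :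
  (forall A B : set (set T), sigma_subfield P A -> sigma_subfield P B ->
     A `<` B ->
     (1 <= opnorm P p (fun f x => (cond_exp P B f x - cond_exp P A f x)%R))%E) /\
  (forall A B : set (set T), sigma_subfield P A -> sigma_subfield P B ->
     has_indep_event P A B ->
     (1 <= opnorm P p (fun f x => (cond_exp P A f x - cond_exp P B f x)%R))%E) /\
  (forall Bs : nat -> set (set T), (forall n, sigma_subfield P (Bs n)) ->
     (infinite_set [set n | Bs n `<` Bs 0%N \/ Bs 0%N `<` Bs n] \/
      infinite_set [set n | has_indep_event P (Bs n) (Bs 0%N) \/
                            has_indep_event P (Bs 0%N) (Bs n)]) ->
     ~ (opnorm P p (fun f x => (cond_exp P (Bs n) f x - cond_exp P (Bs 0%N) f x)%R)
          @[n --> \oo] --> 0%E)) /\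
  (forall Bs : nat -> set (set T), (forall n, sigma_subfield P (Bs n)) ->
     (forall n m, (n <= m)%N -> Bs n `<=` Bs m) ->
     ~ (exists N, forall n, (N <= n)%N -> Bs n = Bs N) ->
     ~ (opnorm P p (fun f x => (cond_exp P (Bs n) f x - cond_exp P (<<s \bigcup_k Bs k >>) f x)%R)
          @[n --> \oo] --> 0%E)) /\
  (forall Bs : nat -> set (set T), (forall n, sigma_subfield P (Bs n)) ->
     (forall n m, (n <= m)%N -> Bs m `<=` Bs n) ->
     ~ (exists N, forall n, (N <= n)%N -> Bs n = Bs N) ->
     ~ (opnorm P p (fun f x => (cond_exp P (Bs n) f x - cond_exp P (\bigcap_k Bs k) f x)%R)
          @[n --> \oo] --> 0%E)).
Proof.
split; [|split; [|split; [|split]]].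
- by move=> A B sA sB; exact: opnorm_sub_cond_exp_ge1_proper.
- by move=> A B sA sB; exact: opnorm_sub_cond_exp_ge1_indep.
- by move=> Bs sBs; exact: opnorm_sub_cond_exp_not_cvg0.
- by move=> Bs sBs; exact: opnorm_sub_cond_exp_not_cvg0_incr.
- by move=> Bs sBs; exact: opnorm_sub_cond_exp_not_cvg0_decr.
Qed.
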